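(* Let $X_{\Omega_1}$ and $X_{\Omega_2}$ be convex toric domains and assume there exists $r>0$ such that $X_{\Omega_1}\subset B^4(r)\subset X_{\Omega_2}$. Let $\{\Phi_t\}_{t\in[0,1]}\subset\mathrm{Sp}(4,\mathbb{R})$ be the loop \[\Phi_t(z_1,z_2)=\begin{cases}(e^{4\pi i t}z_1,z_2), & t\in[0,\tfrac12],\\ (z_1,e^{-4\pi i t}z_2), & t\in[\tfrac12,1].\end{cases}\] Then the loop $\{\varphi_t=\Phi_t|_{X_{\Omega_1}}\}_{t\in[0,1]}$ is contractible in $\mathrm{SympEmb}(X_{\Omega_1},X_{\Omega_2})$.
   Context: For $\Omega\subset\mathbb{R}^2_{\geq0}$, $X_\Omega=\{(z_1,z_2)\in\mathbb{C}^2 \mid \pi(|z_1|^2,|z_2|^2)\in\Omega\}$ with the restriction of $\omega_{\mathrm{std}}$. A convex toric domain is $X_\Omega$ with $\Omega=\{(x,y)\mid 0\le x\le a,\ 0\le y\le f(x)\}$ and $f:[0,a]\to\mathbb{R}_{\ge0}$ nonincreasing and concave. $B^4(r)=\{(z_1,z_2)\mid \pi|z_1|^2+\pi|z_2|^2\le r\}$. $\mathrm{SympEmb}(M,N)$ is the space of symplectic embeddings of $M$ into $N$. *)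

From HB Require Import structures.
From mathcomp Require Import all_boot all_order all_algebra.
From mathcomp Require Import all_classical all_reals all_analysis.
Set Implicit Arguments. Unset Strict Implicit. Unset Printing Implicit Defensive.
Import Order.TTheory GRing.Theory Num.Theory.
Import numFieldNormedType.Exports.
Local Open Scope classical_set_scope.
Local Open Scope ring_scope.

(* C^2 = R^4 with real coordinates (x1, y1, x2, y2), z_k = x_k + i y_k. *)
Definition V4 (R : realType) := 'rV[R]_4.

Definition coord {R : realType} (k : nat) (v : V4 R) : R := v ord0 (inord k).

Definition mk4 {R : realType} (a b c d : R) : V4 R :=
  \row_(i < 4) (if (i : nat) == 0%N then a else if (i : nat) == 1%N then b
               else if (i : nat) == 2%N then c else d).

Definition omega_std {R : realType} (u v : V4 R) : R :=
  coord 0 u * coord 1 v - coord 1 u * coord 0 v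
  + coord 2 u * coord 3 v - coord 3 u * coord 2 v.

Definition mu1 {R : realType} (v : V4 R) : R := pi * (coord 0 v ^+ 2 + coord 1 v ^+ 2).
Definition mu2 {R : realType} (v : V4 R) : R := pi * (coord 2 v ^+ 2 + coord 3 v ^+ 2).

Definition Omega_of {R : realType} (a : R) (f : R -> R) : set (R * R) :=
  [set p | 0 <= p.1 <= a /\ 0 <= p.2 <= f p.1].

Definition X_Omega {R : realType} (Om : set (R * R)) : set (V4 R) :=
  [set z | Om (mu1 z, mu2 z)].

(* f : [0,a] -> R_{>=0} nonincreasing and concave (only values on [0,a] matter) *)
Definition convex_toric_profile {R : realType} (a : R) (f : R -> R) : Prop :=
  0 <= a /\
  (forall x, 0 <= x <= a -> 0 <= f x) /\
  (forall x y, 0 <= x <= a -> 0 <= y <= a -> x <= y -> f y <= f x) /\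
  (forall x y (l : R), 0 <= x <= a -> 0 <= y <= a -> 0 <= l <= 1 ->
      l * f x + (1 - l) * f y <= f (l * x + (1 - l) * y)).

Definition ball4 {R : realType} (r : R) : set (V4 R) :=
  [set z | mu1 z + mu2 z <= r].

Fixpoint iterD {R : realType} (ds : seq (V4 R)) (f : V4 R -> V4 R) : V4 R -> V4 R :=
  match ds with
  | [::] => f
  | v :: ds' => fun x => derive (iterD ds' f) x v
  end.

Definition smooth_on {R : realType} (U : set (V4 R)) (f : V4 R -> V4 R) : Prop :=
  forall (ds : seq (V4 R)) (x : V4 R), U x ->
    (forall v, derivable (iterD ds f) x v) /\ {for x, continuous (iterD ds f)}.

Definition symp_emb {R : realType} (X Y : set (V4 R)) (phi : V4 R -> V4 R) : Prop :=
  (exists U : set (V4 R), open U /\ X `<=` U /\ smooth_on U phi) /\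
  (forall x y, X x -> X y -> phi x = phi y -> x = y) /\
  (forall x, X x -> Y (phi x)) /\
  (forall x, X x -> forall u v,
      omega_std (derive phi x u) (derive phi x v) = omega_std u v).

Definition unit_square {R : realType} : set (R * R) :=
  [set st | 0 <= st.1 <= 1 /\ 0 <= st.2 <= 1].

(* a 2-parameter family G : [0,1]^2 -> SympEmb(X,Y), continuous for the
   C^infty topology: every x-derivative (of every order) is jointly
   continuous on [0,1]^2 x X. *)
Definition cinf_continuous_family {R : realType} (X : set (V4 R))
    (G : R -> R -> V4 R -> V4 R) : Prop :=
  forall ds : seq (V4 R),
    {within [set p : (R * R) * V4 R | unit_square p.1 /\ X p.2],
      continuous (fun p : (R * R) * V4 R => iterD ds (G p.1.1 p.1.2) p.2)}.

(* Elements of SympEmb(X,Y)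
   are maps on X, so equalities are imposed on X. *)
Definition loop_contractible_in_SympEmb {R : realType} (X Y : set (V4 R))
    (phi : R -> V4 R -> V4 R) : Prop :=
  exists H : R -> R -> V4 R -> V4 R,
    (forall s t, unit_square (s, t) -> symp_emb X Y (H s t)) /\
    cinf_continuous_family X H /\
    (forall t x, 0 <= t <= 1 -> X x -> H 0 t x = phi t x) /\
    (forall s x, 0 <= s <= 1 -> X x -> H s 0 x = H s 1 x) /\
    (forall t x, 0 <= t <= 1 -> X x -> H 1 t x = H 1 0 x).

Definition Phi_loop {R : realType} (t : R) (z : V4 R) : V4 R :=
  if t <= 2^-1 then
    let th := 4 * pi * t in
    mk4 (cos th * coord 0 z - sin th * coord 1 z)
        (sin th * coord 0 z + cos th * coord 1 z)
        (coord 2 z) (coord 3 z)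
  else
    let th := - (4 * pi * t) in
    mk4 (coord 0 z) (coord 1 z)
        (cos th * coord 2 z - sin th * coord 3 z)
        (sin th * coord 2 z + cos th * coord 3 z).

(* The loop lies in U(2) = Sp(4, R) ∩ O(4).  Unitary maps preserve B^4(r), so each
   of them restricts to a symplectic embedding X_Ω1 ⊂ B^4(r) → B^4(r) ⊂ X_Ω2, and it
   suffices to contract the loop inside U(2).  Conjugating the second half of the loop (a double negative turn of z2) by
   the rotations of the real (z1, z2)-plane up to angle π/2 turns it into a double
   negative turn of z1.  The loop is then t ↦ e^(4πi min(t, 1-t)) acting on z1, which
   winds forth and back and shrinks to the identity by scaling its angle to 0. *)

From HB Require Import structures.
From mathcomp Require Import all_boot all_order all_algebra.
From mathcomp Require Import all_classical all_reals all_analysis.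
From mathcomp Require Import ring lra.

Set Implicit Arguments.
Unset Strict Implicit.
Unset Printing Implicit Defensive.

Import Order.TTheory GRing.Theory Num.Theory.
Import numFieldNormedType.Exports.
Local Open Scope classical_set_scope.
Local Open Scope ring_scope.

Section MatrixContinuity.
Variables (R : realType) (T : topologicalType).

Lemma continuous_mx m n (F : T -> 'M[R]_(m, n)) :
  (forall i j, continuous (fun p => F p i j)) -> continuous F.
Proof.
move=> Fc p A /nbhs_ballP[e /= e0 eA].
have : \forall q \near p, forall ij : 'I_m * 'I_n,
    ball (F p ij.1 ij.2) e (F q ij.1 ij.2).
  by apply: filter_forall => ij; apply: (Fc ij.1 ij.2 p); exact: nbhsx_ballx.
by apply: filterS => q Fq; apply: eA; split => // i j; exact: (Fq (i, j)).
Qed.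

Lemma continuous_mx_entry m n (F : T -> 'M[R]_(m, n)) i j :
  continuous F -> continuous (fun p => F p i j).
Proof. by move=> Fc p; exact: (continuous_comp (Fc p) (@coord_continuous R m n i j (F p))). Qed.

Lemma continuous_mulmx m n l (F : T -> 'M[R]_(m, n)) (G : T -> 'M[R]_(n, l)) :
  continuous F -> continuous G -> continuous (fun p => F p *m G p).
Proof.
move=> Fc Gc; apply: continuous_mx => i j.
have -> : (fun p => (F p *m G p) i j) = \sum_k (fun p => F p i k * G p k j).
  by apply/funext => p; rewrite fct_sumE mxE.
apply: (big_ind (fun f : T -> R => continuous f)) => [|f g fc gc|k _].
- exact: (@cst_continuous T R 0).
- by move=> p; apply: continuousD; [exact: fc | exact: gc].
- by move=> p; apply: continuousM; exact: continuous_mx_entry.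
Qed.

End MatrixContinuity.

Section Coordinates.
Variable R : realType.
Implicit Types (u v : V4 R) (a b c d : R).

Lemma coord_mk4 a b c d k : (k < 4)%N ->
  coord k (mk4 a b c d) =
  if k == 0%N then a else if k == 1%N then b else if k == 2%N then c else d.
Proof. by move=> k4; rewrite /coord /mk4 mxE inordK. Qed.

Lemma vec4P u v : (forall k, (k < 4)%N -> coord k u = coord k v) <-> u = v.
Proof.
split=> [uv|-> //]; apply/rowP => j.
by have := uv j (ltn_ord j); rewrite /coord inord_val.
Qed.

Lemma mx4P (A B : 'M[R]_4) : (forall u : V4 R, u *m A = u *m B) <-> A = B.
Proof. by split=> [AB|-> //]; apply/row_matrixP => i; rewrite !rowE. Qed.

(* Matrices act on row vectors, [x |-> x *m M], so the rows of [M] are the images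
   of the basis vectors. *)
Definition mx_of_rows (r0 r1 r2 r3 : V4 R) : 'M[R]_4 :=
  \matrix_(i < 4) nth 0 [:: r0; r1; r2; r3] i.

Lemma mk4_coord u : mk4 (coord 0 u) (coord 1 u) (coord 2 u) (coord 3 u) = u.
Proof. by apply/vec4P => -[|[|[|[|k]]]] // _; rewrite coord_mk4. Qed.

Lemma coord_mul_rows u r0 r1 r2 r3 k : (k < 4)%N ->
  coord k (u *m mx_of_rows r0 r1 r2 r3) =
  coord 0 u * coord k r0 + coord 1 u * coord k r1
  + coord 2 u * coord k r2 + coord 3 u * coord k r3.
Proof.
move=> k4; rewrite /coord mxE !big_ord_recl big_ord0 addr0 !addrA !mxE /=.
by congr (_ * _ + _ * _ + _ * _ + _ * _); congr (u _ _); apply/val_inj; rewrite /= inordK.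
Qed.

Lemma continuous_mk4 (T : topologicalType) (f0 f1 f2 f3 : T -> R) :
  continuous f0 -> continuous f1 -> continuous f2 -> continuous f3 ->
  continuous (fun p => mk4 (f0 p) (f1 p) (f2 p) (f3 p)).
Proof.
move=> c0 c1 c2 c3; apply: continuous_mx => i j.
by under eq_fun do rewrite mxE; case: j => -[|[|[|[|j]]]].
Qed.

Lemma continuous_mx_of_rows (T : topologicalType) (r0 r1 r2 r3 : T -> V4 R) :
  continuous r0 -> continuous r1 -> continuous r2 -> continuous r3 ->
  continuous (fun p => mx_of_rows (r0 p) (r1 p) (r2 p) (r3 p)).
Proof.
move=> c0 c1 c2 c3; apply: continuous_mx => i j.
by under eq_fun do rewrite mxE; case: i => -[|[|[|[|i]]]] //= _; exact: continuous_mx_entry.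
Qed.

End Coordinates.

Section LinearMaps.
Variable R : realType.

Lemma is_derive_mulmxr m n l (M : 'M[R]_(n, l)) (x v : 'M[R]_(m, n)) :
  is_derive x v (fun y => y *m M) (v *m M).
Proof.
have Mc : continuous (fun y : 'M[R]_(m, n) => y *m M).
  by apply: continuous_mulmx => [y|]; [exact: cvg_id | exact: cst_continuous].
have dM := @linear_differentiable _ _ _ (mulmxr M) x Mc.
apply: DeriveDef; first exact: diff_derivable.
by rewrite deriveE // (@diff_lin _ _ _ (mulmxr M) x Mc).
Qed.

Lemma iterD_mulmxr (M : 'M[R]_4) v ds :
  iterD (v :: ds) (fun y => y *m M) = cst (if ds is [::] then v *m M else 0).
Proof.
elim: ds v => [|w ds IH] v /=; apply/funext => x.
  exact: (@derive_val _ _ _ _ _ _ _ (is_derive_mulmxr M x v)).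
by rewrite [in LHS]/= -/(iterD (w :: ds) _) IH derive_cst.
Qed.

Lemma smooth_on_mulmxr (U : set (V4 R)) (M : 'M[R]_4) : smooth_on U (fun y => y *m M).
Proof.
move=> [|v ds] x _.
  split => [w|]; first exact: (@ex_derive _ _ _ _ _ _ _ (is_derive_mulmxr M x w)).
  by apply: continuous_mulmx => [y|]; [exact: cvg_id | exact: cst_continuous].
by rewrite iterD_mulmxr; split => [w|]; [exact: derivable_cst | exact: cst_continuous].
Qed.

Lemma cinf_continuous_mulmx (X : set (V4 R)) (M : R -> R -> 'M[R]_4) :
  continuous (fun st : R * R => M st.1 st.2) ->
  cinf_continuous_family X (fun s t x => x *m M s t).
Proof.
move=> Mc ds; apply: continuous_subspaceT.
have Mpc : continuous (fun p : (R * R) * V4 R => M p.1.1 p.1.2).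
  by move=> p; exact: (continuous_comp (@cvg_fst _ _ _ _ _) (Mc p.1)).
case: ds => [|v ds].
  by apply: continuous_mulmx Mpc => p; exact: (@cvg_snd _ _ _ _ _).
under eq_fun do rewrite iterD_mulmxr.
case: ds => [|w ds] /=; last exact: cst_continuous.
by apply: continuous_mulmx Mpc => p; exact: cst_continuous.
Qed.

End LinearMaps.

Section Rotations.
Variable R : realType.
Implicit Types (u : V4 R) (th a b : R).

Definition rot_z1 th : 'M[R]_4 :=
  mx_of_rows (mk4 (cos th) (sin th) 0 0) (mk4 (- sin th) (cos th) 0 0)
             (mk4 0 0 1 0) (mk4 0 0 0 1).

Definition rot_z2 th : 'M[R]_4 :=
  mx_of_rows (mk4 1 0 0 0) (mk4 0 1 0 0)
             (mk4 0 0 (cos th) (sin th)) (mk4 0 0 (- sin th) (cos th)).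

Definition rot_mix th : 'M[R]_4 :=
  mx_of_rows (mk4 (cos th) 0 (sin th) 0) (mk4 0 (cos th) 0 (sin th))
             (mk4 (- sin th) 0 (cos th) 0) (mk4 0 (- sin th) 0 (cos th)).

Lemma mul_rot_z1 u th : u *m rot_z1 th =
  mk4 (cos th * coord 0 u - sin th * coord 1 u)
      (sin th * coord 0 u + cos th * coord 1 u) (coord 2 u) (coord 3 u).
Proof.
apply/vec4P => k k4; rewrite coord_mul_rows // !coord_mk4 //.
by case: k k4 => [|[|[|[|k]]]] //= _; ring.
Qed.

Lemma mul_rot_z2 u th : u *m rot_z2 th =
  mk4 (coord 0 u) (coord 1 u) (cos th * coord 2 u - sin th * coord 3 u)
      (sin th * coord 2 u + cos th * coord 3 u).
Proof.
apply/vec4P => k k4; rewrite coord_mul_rows // !coord_mk4 //.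
by case: k k4 => [|[|[|[|k]]]] //= _; ring.
Qed.

Lemma mul_rot_mix u th : u *m rot_mix th =
  mk4 (cos th * coord 0 u - sin th * coord 2 u)
      (cos th * coord 1 u - sin th * coord 3 u)
      (sin th * coord 0 u + cos th * coord 2 u)
      (sin th * coord 1 u + cos th * coord 3 u).
Proof.
apply/vec4P => k k4; rewrite coord_mul_rows // !coord_mk4 //.
by case: k k4 => [|[|[|[|k]]]] //= _; ring.
Qed.

Lemma rot_z1D a b : rot_z1 a *m rot_z1 b = rot_z1 (a + b).
Proof.
apply/mx4P => u; rewrite mulmxA !mul_rot_z1 !coord_mk4 //= cosD sinD.
by congr mk4; ring.
Qed.

Lemma rot_mixD a b : rot_mix a *m rot_mix b = rot_mix (a + b).
Proof.
apply/mx4P => u; rewrite mulmxA !mul_rot_mix !coord_mk4 //= cosD sinD.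
by congr mk4; ring.
Qed.

Lemma rot_z1_0 : rot_z1 0 = 1.
Proof.
apply/mx4P => u; rewrite mul_rot_z1 mulmx1 cos0 sin0 -[RHS]mk4_coord.
by congr mk4; ring.
Qed.

Lemma rot_z2_0 : rot_z2 0 = 1.
Proof.
apply/mx4P => u; rewrite mul_rot_z2 mulmx1 cos0 sin0 -[RHS]mk4_coord.
by congr mk4; ring.
Qed.

Lemma rot_mix_0 : rot_mix 0 = 1.
Proof.
apply/mx4P => u; rewrite mul_rot_mix mulmx1 cos0 sin0 -[RHS]mk4_coord.
by congr mk4; ring.
Qed.

Lemma rot_mixNK th : rot_mix (- th) *m rot_mix th = 1.
Proof. by rewrite rot_mixD addNr rot_mix_0. Qed.

Lemma rot_z1_periodic : periodic rot_z1 (pi *+ 2).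
Proof. by move=> th; rewrite /rot_z1 cosD2pi sinD2pi. Qed.

Lemma rot_z2_periodic : periodic rot_z2 (pi *+ 2).
Proof. by move=> th; rewrite /rot_z2 cosD2pi sinD2pi. Qed.

Lemma rot_z1_2pi : rot_z1 (pi *+ 2) = 1.
Proof. by rewrite -[pi *+ 2]add0r rot_z1_periodic rot_z1_0. Qed.

Lemma rot_z2_N2pi : rot_z2 (- (pi *+ 2)) = 1.
Proof. by rewrite -rot_z2_periodic addNr rot_z2_0. Qed.

Lemma rot_mix_conj b : rot_mix (- (pi / 2)) *m rot_z2 b *m rot_mix (pi / 2) = rot_z1 b.
Proof.
apply/mx4P => u; rewrite !mulmxA mul_rot_mix mul_rot_z2 mul_rot_mix mul_rot_z1.
rewrite !coord_mk4 //= cosN sinN cos_pihalf sin_pihalf.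
by congr mk4; ring.
Qed.

Let continuous_cos_sin :
  [/\ continuous (@cos R), continuous (@sin R) & continuous (fun th : R => - sin th)].
Proof.
split; [exact: continuous_cos | exact: continuous_sin |].
by move=> th; apply: continuousN; exact: continuous_sin.
Qed.

Lemma continuous_rot_z1 : continuous rot_z1.
Proof.
have [cc sc nsc] := continuous_cos_sin.
by apply: continuous_mx_of_rows; apply: continuous_mk4 => //; exact: cst_continuous.
Qed.

Lemma continuous_rot_z2 : continuous rot_z2.
Proof.
have [cc sc nsc] := continuous_cos_sin.
by apply: continuous_mx_of_rows; apply: continuous_mk4 => //; exact: cst_continuous.
Qed.

Lemma continuous_rot_mix : continuous rot_mix.
Proof.
have [cc sc nsc] := continuous_cos_sin.
by apply: continuous_mx_of_rows; apply: continuous_mk4 => //; exact: cst_continuous.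
Qed.

End Rotations.

Section Unitary.
Variable R : realType.
Implicit Types (u v : V4 R) (M N : 'M[R]_4) (th a b c d : R).

Definition unitary_mx M : Prop :=
  (forall u v, omega_std (u *m M) (v *m M) = omega_std u v) /\
  (forall u, mu1 (u *m M) + mu2 (u *m M) = mu1 u + mu2 u).

Lemma unitary_mxM M N : unitary_mx M -> unitary_mx N -> unitary_mx (M *m N).
Proof.
by move=> [Mw Mmu] [Nw Nmu]; split => [u v|u]; rewrite !mulmxA ?Nw ?Nmu ?Mw ?Mmu.
Qed.

Lemma rot_plane_area th a b c d :
  (cos th * a - sin th * b) * (sin th * c + cos th * d)
  - (sin th * a + cos th * b) * (cos th * c - sin th * d) = a * d - b * c.
Proof. by rewrite -[RHS]mul1r -(cos2Dsin2 th); ring. Qed.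

Lemma rot_plane_norm th a b :
  (cos th * a - sin th * b) ^+ 2 + (sin th * a + cos th * b) ^+ 2 = a ^+ 2 + b ^+ 2.
Proof. by rewrite -[RHS]mul1r -(cos2Dsin2 th); ring. Qed.

Lemma unitary_rot_z1 th : unitary_mx (rot_z1 th).
Proof.
split => [u v|u]; rewrite /omega_std /mu1 /mu2 !mul_rot_z1 !coord_mk4 //=.
- by rewrite rot_plane_area.
- by rewrite rot_plane_norm.
Qed.

Lemma unitary_rot_z2 th : unitary_mx (rot_z2 th).
Proof.
split => [u v|u]; rewrite /omega_std /mu1 /mu2 !mul_rot_z2 !coord_mk4 //=.
- by rewrite -!addrA rot_plane_area.
- by rewrite rot_plane_norm.
Qed.

Lemma unitary_rot_mix th : unitary_mx (rot_mix th).
Proof.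
split => [u v|u]; rewrite /omega_std /mu1 /mu2 !mul_rot_mix !coord_mk4 //=.
all: by rewrite -[RHS]mul1r -(cos2Dsin2 th); ring.
Qed.

Lemma mu_eq0 u : mu1 u + mu2 u = 0 -> u = 0.
Proof.
rewrite /mu1 /mu2 -mulrDr => /eqP; rewrite mulf_eq0 gt_eqF ?pi_gt0 //= => /eqP u0.
have := sqr_ge0 (coord 0 u); have := sqr_ge0 (coord 1 u).
have := sqr_ge0 (coord 2 u); have := sqr_ge0 (coord 3 u).
move=> ? ? ? ?; apply/vec4P => k k4; rewrite [RHS]/coord mxE.
by apply/eqP; rewrite -sqrf_eq0; apply/eqP; case: k k4 => [|[|[|[|k]]]] //= _; lra.
Qed.

Lemma symp_emb_unitary (X Y : set (V4 R)) r M :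
  X `<=` ball4 r -> ball4 r `<=` Y -> unitary_mx M -> symp_emb X Y (fun x => x *m M).
Proof.
move=> Xr rY [Mw Mmu]; split; [|split; [|split]].
- by exists setT; split; [exact: openT | split; [| exact: smooth_on_mulmxr]].
- move=> x y _ _ Mxy; apply/eqP; rewrite -subr_eq0; apply/eqP/mu_eq0.
  by rewrite -Mmu mulmxBl Mxy subrr /mu1 /mu2 /coord !mxE; ring.
- by move=> x /Xr Xx; apply: rY; rewrite /ball4 /= Mmu.
- move=> x _ u v.
  rewrite (@derive_val _ _ _ _ _ _ _ (is_derive_mulmxr M x u)).
  by rewrite (@derive_val _ _ _ _ _ _ _ (is_derive_mulmxr M x v)).
Qed.

End Unitary.

Section Contraction.
Variable R : realType.
Implicit Types s t : R.

Definition mix_angle s : R := pi / 2 * Order.min (2 * s) 1.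
Definition shrink s : R := Order.min (2 - 2 * s) 1.
Definition angle1 t : R := 4 * pi * Order.min t 2^-1.
Definition angle2 t : R := 4 * pi * Order.max (t - 2^-1) 0.

(* For s <= 1/2 the z2-half of the loop is conjugated towards a z1-rotation
   ([rot_mix_conj]); for s >= 1/2 the angle of the resulting z1-loop is scaled to 0. *)
Definition contraction s t : 'M[R]_4 :=
  rot_mix (- mix_angle s) *m rot_z2 (- (shrink s * angle2 t))
  *m rot_mix (mix_angle s) *m rot_z1 (shrink s * angle1 t).

Lemma unitary_contraction s t : unitary_mx (contraction s t).
Proof.
by do !apply: unitary_mxM; [exact: unitary_rot_mix | exact: unitary_rot_z2
  | exact: unitary_rot_mix | exact: unitary_rot_z1].
Qed.

Lemma four_pi_half : 4 * pi * 2^-1 = pi *+ 2 :> R.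
Proof. by rewrite mulr2n; field. Qed.

Lemma contraction_t0 s : contraction s 0 = 1.
Proof.
rewrite /contraction /angle1 /angle2 min_l ?invr_ge0 // max_r; last by lra.
by rewrite !mulr0 oppr0 rot_z2_0 rot_z1_0 !mulmx1 rot_mixNK.
Qed.

Lemma contraction_t1 s : contraction s 1 = 1.
Proof.
rewrite /contraction /angle1 /angle2 min_r; last by lra.
rewrite max_l; last by lra.
rewrite (_ : 1 - 2^-1 = 2^-1); last by field.
rewrite four_pi_half; have [s_le|s_gt] := leP s 2^-1.
  rewrite /shrink min_r; last by lra.
  by rewrite !mul1r rot_z2_N2pi rot_z1_2pi !mulmx1 rot_mixNK.
rewrite /mix_angle min_r; last by lra.
by rewrite mulr1 rot_mix_conj rot_z1D addNr rot_z1_0.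
Qed.

Lemma contraction_s1 t : contraction 1 t = 1.
Proof.
rewrite /contraction /shrink mulr1 subrr min_l //.
by rewrite !mul0r oppr0 rot_z2_0 rot_z1_0 !mulmx1 rot_mixNK.
Qed.

Lemma mul_contraction_s0 t x : x *m contraction 0 t = Phi_loop t x.
Proof.
rewrite /contraction /mix_angle /shrink mulr0 min_l // mulr0 oppr0 rot_mix_0.
rewrite mul1mx mulmx1 addr0 min_r; last by lra.
rewrite !mul1r mulmxA /Phi_loop /angle1 /angle2; case: ifP => [t_le|/negbT t_gt].
  rewrite min_l // max_r; last by lra.
  by rewrite mulr0 oppr0 rot_z2_0 mulmx1 mul_rot_z1.
rewrite -ltNge in t_gt; rewrite min_r; last by lra.
rewrite max_l; last by lra.
rewrite four_pi_half rot_z1_2pi mulmx1 mulrBr four_pi_half opprB.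
by rewrite addrC rot_z2_periodic mul_rot_z2.
Qed.

Lemma continuous_mix_angle : continuous mix_angle.
Proof.
move=> s; apply: cvgM; first exact: cvg_cst.
by apply: continuous_min; [apply: cvgM; [exact: cvg_cst | exact: cvg_id] | exact: cvg_cst].
Qed.

Lemma continuous_shrink : continuous shrink.
Proof.
move=> s; apply: (@continuous_min _ _ (fun s => 2 - 2 * s) (fun=> 1)).
  by apply: cvgB; [exact: cvg_cst | apply: cvgM; [exact: cvg_cst | exact: cvg_id]].
exact: cvg_cst.
Qed.

Lemma continuous_angle1 : continuous angle1.
Proof.
move=> t; apply: cvgM; first exact: cvg_cst.
by apply: (@continuous_min _ _ id (fun=> 2^-1)); [exact: cvg_id | exact: cvg_cst].
Qed.

Lemma continuous_angle2 : continuous angle2.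
Proof.
move=> t; apply: cvgM; first exact: cvg_cst.
apply: (@continuous_max _ _ (fun t => t - 2^-1) (fun=> 0)); last exact: cvg_cst.
by apply: cvgB; [exact: cvg_id | exact: cvg_cst].
Qed.

Lemma continuous_contraction : continuous (fun st : R * R => contraction st.1 st.2).
Proof.
have c1 f : continuous f -> continuous (fun st : R * R => f st.1 : R).
  by move=> fc st; exact: (continuous_comp (@cvg_fst _ _ _ _ _) (fc st.1)).
have c2 f : continuous f -> continuous (fun st : R * R => f st.2 : R).
  by move=> fc st; exact: (continuous_comp (@cvg_snd _ _ _ _ _) (fc st.2)).
have shrink_c := c1 _ continuous_shrink; have mix_c := c1 _ continuous_mix_angle.
have mixN_c : continuous (fun st : R * R => - mix_angle st.1).
  by move=> st; apply: cvgN; exact: mix_c.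
have z1_c : continuous (fun st : R * R => shrink st.1 * angle1 st.2).
  by move=> st; apply: cvgM; [exact: shrink_c | exact: c2 _ continuous_angle1 st].
have z2_c : continuous (fun st : R * R => - (shrink st.1 * angle2 st.2)).
  move=> st; apply: cvgN.
  by apply: cvgM; [exact: shrink_c | exact: c2 _ continuous_angle2 st].
rewrite /contraction.
apply: continuous_mulmx; [apply: continuous_mulmx; [apply: continuous_mulmx|]|] => st.
- exact: (continuous_comp (mixN_c st) (@continuous_rot_mix R _)).
- exact: (continuous_comp (z2_c st) (@continuous_rot_z2 R _)).
- exact: (continuous_comp (mix_c st) (@continuous_rot_mix R _)).
- exact: (continuous_comp (z1_c st) (@continuous_rot_z1 R _)).
Qed.

End Contraction.

Theorem proposition1p10 (R : realType) (a1 a2 : R) (f1 f2 : R -> R) (r : R) :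
  convex_toric_profile a1 f1 ->
  convex_toric_profile a2 f2 ->
  0 < r ->
  X_Omega (Omega_of a1 f1) `<=` ball4 r ->
  ball4 r `<=` X_Omega (Omega_of a2 f2) ->
  loop_contractible_in_SympEmb (X_Omega (Omega_of a1 f1)) (X_Omega (Omega_of a2 f2))
    (fun t => Phi_loop t).
Proof.
move=> _ _ _ X1r rX2.
exists (fun s t x => x *m contraction s t).
split; [|split; [|split; [|split]]].
- by move=> s t _; exact: symp_emb_unitary X1r rX2 (unitary_contraction s t).
- by apply: cinf_continuous_mulmx; exact: continuous_contraction.
- by move=> t x _ _; rewrite mul_contraction_s0.
- by move=> s x _ _; rewrite contraction_t0 contraction_t1.
- by move=> t x _ _; rewrite !contraction_s1.
Qed.
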